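(* Let $a>0$ and let $k$ be a non-negative integer. Let $\psi(t)=\sum_{n\ge1}e^{-\pi n^2 t/a}$, $\phi(t)=\sum_{n\ge1}e^{-\pi n^2 a t}$, and \[\epsilon_{2k+1}(a)=\frac{1}{4\pi a}\int_1^\infty \{a^{1/2}\phi(t)-\psi(t)\}\,\frac{(t-1)^{2k+1}}{(1+t)^{2k+5/2}}\,dt.\] Let $\Psi(\tau)=\sum_{n\ge1}e^{-\pi n^2\tau}$ for $\tau>0$ and $E_{2k+1}(a)=a^{1/4}\Psi(a)\,U(2k+2,\tfrac12,2\pi a)$. Then \[|\epsilon_{2k+1}(a)|<\mathcal{B}_{2k+1}(a):=\frac{a^{-3/4}(2k+1)!}{4\sqrt{2}\,\pi}\{E_{2k+1}(a)+E_{2k+1}(1/a)\}.\]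
   Context: $U(\alpha,b,z)$ denotes the confluent hypergeometric function of the second kind (Tricomi's function), which for $\alpha>0$, $\Re z>0$ has the representation $U(\alpha,b,z)=\frac{1}{\Gamma(\alpha)}\int_0^\infty e^{-zt}t^{\alpha-1}(1+t)^{b-\alpha-1}dt$. *)

From Stdlib Require Import Reals Arith Factorial.
From Coquelicot Require Import Coquelicot.
Open Scope R_scope.

Definition Psi (x : R) : R :=
  Series (fun n : nat => exp (- PI * (INR (S n))^2 * x)).

Definition psi_a (a t : R) : R :=
  Series (fun n : nat => exp (- PI * (INR (S n))^2 * t / a)).
Definition phi_a (a t : R) : R :=
  Series (fun n : nat => exp (- PI * (INR (S n))^2 * a * t)).

Definition Gamma (al : R) : R :=
  RInt_gen (fun t => exp (- t) * Rpower t (al - 1)) (at_right 0) (Rbar_locally p_infty).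

(* Tricomi's U for al > 0, Re z > 0:
   U(al,b,z) = 1/Gamma(al) int_0^oo e^{-zt} t^{al-1} (1+t)^{b-al-1} dt *)
Definition TricomiU (al b z : R) : R :=
  / Gamma al *
  RInt_gen (fun t => exp (- z * t) * Rpower t (al - 1) * Rpower (1 + t) (b - al - 1))
    (at_right 0) (Rbar_locally p_infty).

Definition epsilon_odd (k : nat) (a : R) : R :=
  / (4 * PI * a) *
  RInt_gen (fun t => (Rpower a (1/2) * phi_a a t - psi_a a t) *
                     ((t - 1) ^ (2 * k + 1) / Rpower (1 + t) (INR (2 * k) + 5/2)))
    (at_point 1) (Rbar_locally p_infty).

Definition E_odd (k : nat) (a : R) : R :=
  Rpower a (1/4) * Psi a * TricomiU (INR (2 * k + 2)) (1/2) (2 * PI * a).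

Definition B_odd (k : nat) (a : R) : R :=
  Rpower a (-3/4) * INR (Factorial.fact (2 * k + 1)) / (4 * sqrt 2 * PI) *
  (E_odd k a + E_odd k (/ a)).

From Stdlib Require Import Reals Lra Lia Factorial.
From Coquelicot Require Import Coquelicot.
Open Scope R_scope.

(* For t >= 1 the theta sum decays like its first term: Psi (c t) <= Psi c * exp (- pi c (t - 1)).
   Hence the integrals of a^(1/2) phi = a^(1/2) Psi (a .) and of psi = Psi (./a) against the weight
   (t-1)^(2k+1) / (1+t)^(2k+5/2) lie in [0, a^(1/2) X(a)] and [0, X(1/a)], where, substituting
   t = 2u + 1,
     X(c) = 2^(-1/2) Psi(c) int_0^oo e^(-2 pi c u) u^(2k+1) (1+u)^(-2k-5/2) du
          = 2^(-1/2) Psi(c) (2k+1)! U(2k+2, 1/2, 2 pi c) > 0.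
   Two numbers in [0, X] and [0, Y] differ by less than X + Y, and
   (a^(1/2) X(a) + X(1/a)) / (4 pi a) is exactly B_(2k+1)(a). *)

(** * Improper integrals on [a, +oo) *)

Lemma ex_derive_continuous_R (f : R -> R) (x : R) : ex_derive f x -> continuous f x.
Proof. apply (ex_derive_continuous (V := R_NormedModule)). Qed.

Lemma ex_RInt_continuous_le (f : R -> R) (a b : R) :
  a <= b -> (forall x, a <= x <= b -> continuous f x) -> ex_RInt f a b.
Proof.
  intros Hab Hf. apply (ex_RInt_continuous (V := R_CompleteNormedModule)).
  rewrite Rmin_left, Rmax_right by lra. exact Hf.
Qed.

Lemma RInt_sub_Chasles (f : R -> R) (a b c : R) :
  ex_RInt f a b -> ex_RInt f b c -> RInt f a c - RInt f a b = RInt f b c.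
Proof.
  intros Hab Hbc. rewrite <- (RInt_Chasles f a b c) by assumption.
  unfold plus; simpl. ring.
Qed.

Lemma filterlim_RInt_of_is_RInt_gen (f : R -> R) (a L : R) :
  is_RInt_gen f (at_point a) (Rbar_locally p_infty) L ->
  filterlim (fun b => RInt f a b) (Rbar_locally p_infty) (locally L).
Proof.
  intros H P HP. destruct (H P HP) as [Q S HQ HS HQS].
  unfold filtermap. apply (filter_imp S); [|exact HS]. intros b Sb.
  destruct (HQS a b HQ Sb) as [l [Hl Pl]]. now rewrite (is_RInt_unique f a b l Hl).
Qed.

Lemma is_RInt_gen_of_filterlim_RInt (f : R -> R) (a L : R) :
  (forall b, a <= b -> ex_RInt f a b) ->
  filterlim (fun b => RInt f a b) (Rbar_locally p_infty) (locally L) ->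
  is_RInt_gen f (at_point a) (Rbar_locally p_infty) L.
Proof.
  intros Hf Hl P [eps HP]. destruct (Hl _ (locally_ball L eps)) as [M HM].
  apply (Filter_prod _ _ _ (fun x => x = a) (fun b => Rmax M a < b)).
  - reflexivity.
  - now exists (Rmax M a).
  - intros x b -> Hb. generalize (Rmax_l M a) (Rmax_r M a); intros.
    exists (RInt f a b). split.
    + apply (RInt_correct (V := R_CompleteNormedModule)), Hf. lra.
    + apply HP, HM. lra.
Qed.

Lemma ex_RInt_gen_pinfty_le (f g : R -> R) (a : R) :
  (forall b, a <= b -> ex_RInt f a b) -> (forall b, a <= b -> ex_RInt g a b) ->
  (forall t, a <= t -> Rabs (f t) <= g t) ->
  ex_RInt_gen g (at_point a) (Rbar_locally p_infty) ->
  ex_RInt_gen f (at_point a) (Rbar_locally p_infty).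
Proof.
  intros Hf Hg Hfg [Lg HLg]. apply filterlim_RInt_of_is_RInt_gen in HLg.
  (* The partial integrals of [f] oscillate less than those of [g], which converge. *)
  assert (Hosc : forall b c, a <= b <= c ->
            Rabs (RInt f a c - RInt f a b) <= RInt g a c - RInt g a b).
  { intros b c Hbc.
    assert (Hfbc : ex_RInt f b c) by (apply (ex_RInt_Chasles_2 f a); [lra | apply Hf; lra]).
    assert (Hgbc : ex_RInt g b c) by (apply (ex_RInt_Chasles_2 g a); [lra | apply Hg; lra]).
    rewrite (RInt_sub_Chasles f), (RInt_sub_Chasles g) by (assumption || apply Hf || apply Hg; lra).
    apply (norm_RInt_le f g b c); try apply (RInt_correct (V := R_CompleteNormedModule));
      try assumption; try lra.
    intros t Ht; apply Hfg; lra. }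
  set (F := filtermap (fun b => RInt f a b) (Rbar_locally p_infty)).
  assert (HF : ProperFilter F) by apply filtermap_proper_filter, Rbar_locally_filter.
  assert (HFc : cauchy F).
  { intros eps. destruct (HLg _ (locally_ball Lg (pos_div_2 eps))) as [M HM].
    set (b := Rmax M a + 1).
    assert (Hb : M < b /\ a <= b) by (unfold b; generalize (Rmax_l M a) (Rmax_r M a); lra).
    exists (RInt f a b), b. intros c Hc.
    change (Rabs (RInt f a c - RInt f a b) < eps).
    eapply Rle_lt_trans; [apply Hosc; lra |].
    assert (Hc' := HM c ltac:(lra)). assert (Hb' := HM b ltac:(lra)).
    change (Rabs (RInt g a c - Lg) < eps / 2) in Hc'.
    change (Rabs (RInt g a b - Lg) < eps / 2) in Hb'.
    apply Rabs_lt_between in Hc', Hb'. lra. }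
  exists (lim F). apply is_RInt_gen_of_filterlim_RInt; [exact Hf |].
  intros P [eps HP]. apply (filter_imp (ball (lim F) eps)); [intros; now apply HP |].
  exact (complete_cauchy F HF HFc eps).
Qed.

Lemma is_RInt_gen_pinfty_abs_le (f g : R -> R) (a Lf Lg : R) :
  (forall t, a <= t -> Rabs (f t) <= g t) ->
  is_RInt_gen f (at_point a) (Rbar_locally p_infty) Lf ->
  is_RInt_gen g (at_point a) (Rbar_locally p_infty) Lg -> Rabs Lf <= Lg.
Proof.
  intros Hfg Hf Hg.
  apply (@RInt_gen_norm _ (at_point a) (Rbar_locally p_infty) _ _ f g Lf Lg); try assumption.
  - apply (Filter_prod _ _ _ (fun x => x = a) (fun b => a < b)); [reflexivity | now exists a |].
    simpl; intros x y -> Hy; lra.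
  - apply (Filter_prod _ _ _ (fun x => x = a) (fun b => a < b)); [reflexivity | now exists a |].
    simpl; intros x y -> Hy t Ht. apply Hfg; lra.
Qed.

Lemma is_RInt_gen_pinfty_ge0 (f : R -> R) (a L : R) :
  (forall t, a <= t -> 0 <= f t) ->
  is_RInt_gen f (at_point a) (Rbar_locally p_infty) L -> 0 <= L.
Proof.
  intros Hf HL.
  assert (H := is_RInt_gen_pinfty_abs_le f f a L L
                 ltac:(intros t Ht; rewrite Rabs_pos_eq by auto; lra) HL HL).
  generalize (Rabs_pos L); lra.
Qed.

(* Instance of [is_RInt_gen_scal] with the filters fixed: left to type class resolution, the
   generic lemma is very slow to apply. *)
Lemma is_RInt_gen_pinfty_scal (f : R -> R) (c a L : R) :
  is_RInt_gen f (at_point a) (Rbar_locally p_infty) L ->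
  is_RInt_gen (fun t => c * f t) (at_point a) (Rbar_locally p_infty) (c * L).
Proof. exact (is_RInt_gen_scal f c L). Qed.

Lemma is_RInt_gen_pinfty_comp_lin (f : R -> R) (u v a L : R) : 0 < u ->
  (forall b, u * a + v <= b -> ex_RInt f (u * a + v) b) ->
  is_RInt_gen (fun y => u * f (u * y + v)) (at_point a) (Rbar_locally p_infty) L ->
  is_RInt_gen f (at_point (u * a + v)) (Rbar_locally p_infty) L.
Proof.
  intros Hu Hf H. apply is_RInt_gen_of_filterlim_RInt; [exact Hf |].
  intros P HP. destruct (filterlim_RInt_of_is_RInt_gen _ _ _ H P HP) as [M HM].
  exists (Rmax (u * a + v) (u * M + v)). intros c Hc.
  generalize (Rmax_l (u * a + v) (u * M + v)) (Rmax_r (u * a + v) (u * M + v)); intros.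
  unfold filtermap.
  replace (RInt f (u * a + v) c) with (RInt (fun y => u * f (u * y + v)) a ((c - v) / u)).
  - apply HM. apply Rmult_lt_reg_l with u; [exact Hu |].
    replace (u * ((c - v) / u)) with (c - v) by (field; lra). lra.
  - assert (Hc' : u * ((c - v) / u) + v = c) by (field; lra).
    assert (E := RInt_comp_lin f u v a ((c - v) / u)). rewrite Hc' in E.
    apply E, Hf. lra.
Qed.

Lemma is_RInt_gen_at_right_at_point (f : R -> R) (a b M : R) : a < b ->
  ex_RInt f a b -> (forall x, a <= x <= b -> Rabs (f x) <= M) ->
  is_RInt_gen f (at_right a) (at_point a) 0.
Proof.
  intros Hab Hf Hbd P [eps HP].
  assert (HM : 0 <= M) by (generalize (Hbd a ltac:(lra)) (Rabs_pos (f a)); lra).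
  set (d := Rmin (b - a) (eps / (M + 1))).
  assert (Hd : 0 < d).
  { apply Rmin_glb_lt; [lra |]. apply Rdiv_lt_0_compat; [apply cond_pos | lra]. }
  apply (Filter_prod _ _ _ (fun x => a < x < a + d) (fun y => y = a)).
  - exists (mkposreal d Hd). intros x Hx Hax. change (Rabs (x - a) < d) in Hx.
    apply Rabs_lt_between in Hx. lra.
  - reflexivity.
  - intros x y Hx ->. simpl.
    assert (d1 : d <= b - a) by apply Rmin_l.
    assert (d2 : d <= eps / (M + 1)) by apply Rmin_r.
    assert (Hxa : ex_RInt f x a).
    { apply ex_RInt_swap, (ex_RInt_Chasles_1 f a x b); [lra | exact Hf]. }
    exists (RInt f x a). split; [now apply (RInt_correct (V := R_CompleteNormedModule)) |].
    apply HP. change (Rabs (RInt f x a - 0) < eps). rewrite Rminus_0_r.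
    eapply Rle_lt_trans.
    { apply (norm_RInt_le_const_abs f x a).
      2: apply (RInt_correct (V := R_CompleteNormedModule)), Hxa.
      intros t Ht. rewrite Rmin_right, Rmax_left in Ht by lra. apply Hbd. lra. }
    rewrite Rabs_left by lra.
    assert (0 < eps) by apply cond_pos.
    apply Rle_lt_trans with (eps / (M + 1) * M); [apply Rmult_le_compat_r; lra |].
    apply Rmult_lt_reg_r with (M + 1); [lra |].
    replace (eps / (M + 1) * M * (M + 1)) with (eps * M) by (field; lra). nra.
Qed.

(* [g] may differ from [f] at [a]: the integrands of [Gamma] and [TricomiU] involve [Rpower t _],
   which equals [t ^ _] only for [t > 0] ([Rpower 0 _ = 1]). *)
Lemma RInt_gen_at_right_of_at_point (f g : R -> R) (a b M L : R) : a < b ->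
  ex_RInt f a b -> (forall x, a <= x <= b -> Rabs (f x) <= M) ->
  (forall x, a < x -> f x = g x) ->
  is_RInt_gen f (at_point a) (Rbar_locally p_infty) L ->
  RInt_gen g (at_right a) (Rbar_locally p_infty) = L.
Proof.
  intros Hab Hf Hbd Hfg HL.
  (* explicit instances, for the same reason as in [is_RInt_gen_pinfty_scal] *)
  apply (is_RInt_gen_unique (FFa := Proper_StrongProper _ (at_right_proper_filter a))
           (FFb := Proper_StrongProper _ (Rbar_locally_filter p_infty))).
  assert (H := is_RInt_gen_Chasles f a 0 L (is_RInt_gen_at_right_at_point f a b M Hab Hf Hbd) HL).
  unfold plus in H; simpl in H; rewrite Rplus_0_l in H.
  apply (is_RInt_gen_ext f g); [| exact H].
  apply (Filter_prod _ _ _ (fun x => a < x) (fun y => a < y)).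
  - exists (mkposreal 1 Rlt_0_1). now intros.
  - now exists a.
  - intros x y Hx Hy t Ht. simpl in Ht. apply Hfg. generalize (Rmin_glb_lt x y a Hx Hy). lra.
Qed.

Lemma is_RInt_gen_pinfty_derive (f F : R -> R) (a l : R) :
  (forall x, a <= x -> is_derive F x (f x)) ->
  (forall x, a <= x -> continuous f x) ->
  is_lim F p_infty l ->
  is_RInt_gen f (at_point a) (Rbar_locally p_infty) (l - F a).
Proof.
  intros HF Hf Hl.
  assert (HI : forall b, a <= b -> is_RInt f a b (F b - F a)).
  { intros b Hb. apply (is_RInt_derive F f); rewrite Rmin_left, Rmax_right by lra;
      intros x Hx; [apply HF | apply Hf]; lra. }
  apply is_RInt_gen_of_filterlim_RInt.
  - intros b Hb. exists (F b - F a). now apply HI.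
  - apply (filterlim_ext_loc (fun b => F b - F a)).
    + exists a. intros b Hb. symmetry. apply is_RInt_unique, HI. lra.
    + apply (is_lim_minus' F (fun _ => F a) p_infty l (F a) Hl (is_lim_const _ _)).
Qed.

(** * Gamma at the positive integers *)

Lemma exp_le_exp_compat (x y : R) : x <= y -> exp x <= exp y.
Proof. intros [Hxy | ->]; [now apply Rlt_le, exp_increasing | apply Rle_refl]. Qed.

Lemma exp_INR_mul (n : nat) (x : R) : exp (INR n * x) = exp x ^ n.
Proof. rewrite <- Rpower_pow by apply exp_pos. unfold Rpower. now rewrite ln_exp. Qed.

Lemma exp_mul_pow_le (c t : R) (m : nat) : 0 < c -> 0 < t ->
  exp (- c * t) * t ^ m <= (INR (S m) / c) ^ S m / t.
Proof.
  intros Hc Ht. set (s := INR (S m)).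
  assert (Hs : 0 < s) by (apply lt_0_INR; lia).
  (* [exp (c t) = exp (c t / s) ^ s >= (c t / s) ^ s] with [s = m + 1] *)
  assert (Hexp : (c * t / s) ^ S m <= exp (c * t)).
  { replace (c * t) with (s * (c * t / s)) at 2 by (field; lra).
    unfold s; rewrite exp_INR_mul; fold s. apply pow_incr. split.
    - apply Rlt_le, Rdiv_lt_0_compat; [nra | lra].
    - generalize (exp_ineq1_le (c * t / s)); lra. }
  assert (Hpos : 0 < (c * t / s) ^ S m) by (apply pow_lt, Rdiv_lt_0_compat; nra).
  replace (- c * t) with (- (c * t)) by ring. rewrite exp_Ropp.
  apply Rle_trans with (t ^ m / (c * t / s) ^ S m).
  - rewrite Rmult_comm. apply Rmult_le_compat_l; [apply pow_le; lra |].
    now apply Rinv_le_contravar.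
  - right. rewrite !Rdiv_def, !Rpow_mult_distr, !pow_inv. simpl.
    field. repeat split; try lra; apply pow_nonzero; lra.
Qed.

Lemma is_lim_exp_mul_pow (c : R) (m : nat) : 0 < c ->
  is_lim (fun t => exp (- c * t) * t ^ m) p_infty 0.
Proof.
  intros Hc. set (C := (INR (S m) / c) ^ S m).
  apply (is_lim_le_le_loc (fun _ => 0) (fun t => C * / t)).
  - exists 0. intros t Ht. split.
    + apply Rmult_le_pos; [apply Rlt_le, exp_pos | apply pow_le; lra].
    + now apply exp_mul_pow_le.
  - apply is_lim_const.
  - replace (Finite 0) with (Rbar_mult C (Rbar_inv p_infty)) by (simpl; f_equal; ring).
    apply is_lim_scal_l, is_lim_inv; [apply is_lim_id | discriminate].
Qed.

(* [factorial_poly n t = n! * sum_(j <= n) t^j / j!], so that [- exp (- t) * factorial_poly n t]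
   is an antiderivative of [exp (- t) * t ^ n]. *)
Fixpoint factorial_poly (n : nat) (t : R) : R :=
  match n with
  | O => 1
  | S m => t ^ S m + INR (S m) * factorial_poly m t
  end.

Lemma is_derive_factorial_poly (n : nat) (t : R) :
  is_derive (factorial_poly n) t (factorial_poly n t - t ^ n).
Proof.
  induction n as [|n IH].
  - replace (factorial_poly 0 t - t ^ 0) with 0 by (simpl; ring).
    apply (is_derive_const (V := R_NormedModule)).
  - replace (factorial_poly (S n) t - t ^ S n)
      with (INR (S n) * 1 * t ^ Nat.pred (S n) + INR (S n) * (factorial_poly n t - t ^ n))
      by (change (factorial_poly (S n) t) with (t ^ S n + INR (S n) * factorial_poly n t);
          rewrite Nat.pred_succ; ring).
    apply (is_derive_plus (fun x => x ^ S n) (fun x => INR (S n) * factorial_poly n x)).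
    + apply (is_derive_pow (fun x => x) (S n) t 1 (is_derive_id t)).
    + now apply is_derive_scal.
Qed.

Lemma is_derive_exp_factorial_poly (n : nat) (t : R) :
  is_derive (fun t => - exp (- t) * factorial_poly n t) t (exp (- t) * t ^ n).
Proof.
  replace (exp (- t) * t ^ n)
    with (exp (- t) * factorial_poly n t + - exp (- t) * (factorial_poly n t - t ^ n)) by ring.
  apply (is_derive_mult (fun t => - exp (- t))).
  - auto_derive; [easy | ring].
  - apply is_derive_factorial_poly.
  - intros; apply Rmult_comm.
Qed.

Lemma factorial_poly_0 (n : nat) : factorial_poly n 0 = INR (fact n).
Proof.
  induction n as [|n IH]; [reflexivity |].
  change (factorial_poly (S n) 0) with (0 ^ S n + INR (S n) * factorial_poly n 0).
  rewrite IH, fact_simpl, mult_INR, pow_i by lia. ring.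
Qed.

Lemma is_lim_exp_factorial_poly (n : nat) :
  is_lim (fun t => exp (- t) * factorial_poly n t) p_infty 0.
Proof.
  assert (Hpow : forall m, is_lim (fun t => exp (- t) * t ^ m) p_infty 0).
  { intros m. apply (is_lim_ext (fun t => exp (- 1 * t) * t ^ m)).
    - intros t. do 2 f_equal. ring.
    - apply is_lim_exp_mul_pow, Rlt_0_1. }
  induction n as [|n IH].
  - apply (is_lim_ext (fun t => exp (- t) * t ^ 0)); [now intros | apply Hpow].
  - apply (is_lim_ext
             (fun t => exp (- t) * t ^ S n + INR (S n) * (exp (- t) * factorial_poly n t))).
    { intros t. change (factorial_poly (S n) t) with (t ^ S n + INR (S n) * factorial_poly n t).
      ring. }
    replace (Finite 0) with (Finite (0 + INR (S n) * 0)) by (f_equal; ring).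
    apply is_lim_plus'; [apply Hpow | exact (is_lim_scal_l _ _ _ 0 IH)].
Qed.

Lemma is_RInt_gen_exp_opp_pow (n : nat) :
  is_RInt_gen (fun t => exp (- t) * t ^ n) (at_point 0) (Rbar_locally p_infty) (INR (fact n)).
Proof.
  replace (INR (fact n)) with (0 - - exp (- 0) * factorial_poly n 0)
    by (rewrite factorial_poly_0, Ropp_0, exp_0; ring).
  apply (is_RInt_gen_pinfty_derive _ (fun t => - exp (- t) * factorial_poly n t)).
  - intros x _. apply is_derive_exp_factorial_poly.
  - intros x _. apply ex_derive_continuous_R. auto_derive. easy.
  - apply (is_lim_ext (fun t => - (exp (- t) * factorial_poly n t))); [intros; ring |].
    replace (Finite 0) with (Rbar_opp 0) by (simpl; f_equal; ring).
    apply is_lim_opp, is_lim_exp_factorial_poly.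
Qed.

Lemma Gamma_S (n : nat) : Gamma (INR (S n)) = INR (fact n).
Proof.
  apply (RInt_gen_at_right_of_at_point (fun t => exp (- t) * t ^ n) _ 0 1 1); [lra | | | |].
  - apply ex_RInt_continuous_le; [lra |]. intros x _.
    apply ex_derive_continuous_R. auto_derive. easy.
  - intros x Hx.
    rewrite Rabs_pos_eq by (apply Rmult_le_pos; [apply Rlt_le, exp_pos | apply pow_le; lra]).
    rewrite <- (Rmult_1_l 1). apply Rmult_le_compat.
    + apply Rlt_le, exp_pos.
    + apply pow_le; lra.
    + rewrite <- exp_0. apply exp_le_exp_compat. lra.
    + rewrite <- (pow1 n). apply pow_incr. lra.
  - intros x Hx. rewrite S_INR. replace (INR n + 1 - 1) with (INR n) by ring.
    now rewrite Rpower_pow.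
  - apply is_RInt_gen_exp_opp_pow.
Qed.

(** * The theta sum Psi *)

Lemma continuous_Series_dominated (f : nat -> R -> R) (M : nat -> R) (D : R -> Prop) (x : R) :
  open D -> D x -> ex_series M ->
  (forall n y, D y -> Rabs (f n y) <= M n) ->
  (forall n y, D y -> continuous (f n) y) ->
  continuous (fun y => Series (fun n => f n y)) x.
Proof.
  intros HD Dx HM Hbd Hf.
  assert (HCV : CVU_dom (fun N y => sum_n (fun n => f n y) N) D).
  { apply CVU_dom_cauchy. intros eps. destruct (Cauchy_ex_series M HM eps) as [N HN].
    exists N.
    assert (Htail : forall n m y, D y -> (N <= m <= n)%nat ->
              Rabs (sum_n (fun k => f k y) n - sum_n (fun k => f k y) m) < eps).
    { intros n m y Dy Hmn. destruct (Nat.eq_dec m n) as [<- | Hne].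
      - rewrite Rminus_diag, Rabs_R0. apply cond_pos.
      - assert (E := sum_n_m_sum_n (fun k => f k y) m n ltac:(lia)).
        change (sum_n_m (fun k => f k y) (S m) n
                = sum_n (fun k => f k y) n - sum_n (fun k => f k y) m) in E.
        rewrite <- E.
        eapply Rle_lt_trans; [apply (norm_sum_n_m (fun k => f k y)) |].
        eapply Rle_lt_trans; [apply (sum_n_m_le _ M); intros k; apply Hbd, Dy |].
        eapply Rle_lt_trans; [apply Rle_abs | apply (HN (S m) n); lia]. }
    intros n m y Dy Hn Hm. destruct (Nat.le_ge_cases m n).
    - apply Htail; [exact Dy | lia].
    - rewrite Rabs_minus_sym. apply Htail; [exact Dy | lia]. }
  apply continuity_pt_filterlim.
  apply (CVU_cont_open _ D HD HCV); [| exact Dx].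
  intros n y Dy. apply continuity_pt_filterlim.
  induction n as [|n IH].
  - apply (continuous_ext (f 0%nat)); [intros; now rewrite sum_O | now apply Hf].
  - apply (continuous_ext (fun y => sum_n (fun k => f k y) n + f (S n) y)).
    + intros z. now rewrite sum_Sn.
    + apply (continuous_plus (fun y => sum_n (fun k => f k y) n)); [exact IH | now apply Hf].
Qed.

Lemma ex_series_pow_S (q : R) : 0 <= q < 1 -> ex_series (fun n => q ^ S n).
Proof.
  intros Hq. apply (ex_series_scal_l (V := R_NormedModule) q (fun n => q ^ n)).
  apply ex_series_geom. rewrite Rabs_pos_eq; lra.
Qed.

Lemma Psi_term_le_geom (n : nat) (x : R) : 0 <= x ->
  exp (- PI * INR (S n) ^ 2 * x) <= exp (- PI * x) ^ S n.
Proof.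
  intros Hx. rewrite <- exp_INR_mul. apply exp_le_exp_compat.
  assert (Hs : 1 <= INR (S n)) by (rewrite S_INR; generalize (pos_INR n); lra).
  assert (0 <= PI * x) by (generalize PI_RGT_0; nra).
  replace (- PI * INR (S n) ^ 2 * x) with (- (INR (S n) * INR (S n) * (PI * x))) by ring.
  replace (INR (S n) * (- PI * x)) with (- (INR (S n) * (PI * x))) by ring.
  apply Ropp_le_contravar, Rmult_le_compat_r; nra.
Qed.

Lemma exp_opp_PI_lt_1 (x : R) : 0 < x -> 0 <= exp (- PI * x) < 1.
Proof.
  intros Hx. split; [apply Rlt_le, exp_pos |].
  rewrite <- exp_0. apply exp_increasing. generalize PI_RGT_0; nra.
Qed.

Lemma ex_series_Psi (x : R) : 0 < x -> ex_series (fun n => exp (- PI * INR (S n) ^ 2 * x)).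
Proof.
  intros Hx. apply (ex_series_le (V := R_CompleteNormedModule) _ (fun n => exp (- PI * x) ^ S n)).
  - intros n. change (Rabs (exp (- PI * INR (S n) ^ 2 * x)) <= exp (- PI * x) ^ S n).
    rewrite Rabs_pos_eq by apply Rlt_le, exp_pos. apply Psi_term_le_geom; lra.
  - now apply ex_series_pow_S, exp_opp_PI_lt_1.
Qed.

Lemma Psi_pos (x : R) : 0 < x -> 0 < Psi x.
Proof.
  intros Hx. unfold Psi. rewrite Series_incr_1 by now apply ex_series_Psi.
  assert (Htail : 0 <= Series (fun n => exp (- PI * INR (S (S n)) ^ 2 * x))).
  { set (a := fun n => exp (- PI * INR (S (S n)) ^ 2 * x)).
    rewrite <- (Rmult_0_l (Series a)), <- Series_scal_l. apply Series_le.
    - intros n. rewrite Rmult_0_l. split; [lra | apply Rlt_le, exp_pos].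
    - apply (ex_series_incr_1 (fun n => exp (- PI * INR (S n) ^ 2 * x))), ex_series_Psi, Hx. }
  generalize (exp_pos (- PI * INR 1 ^ 2 * x)). lra.
Qed.

Lemma Psi_le_exp (x y : R) : 0 < y <= x -> Psi x <= Psi y * exp (- PI * (x - y)).
Proof.
  intros Hxy. unfold Psi. rewrite <- Series_scal_r. apply Series_le.
  - intros n. split; [apply Rlt_le, exp_pos |].
    rewrite <- exp_plus. apply exp_le_exp_compat.
    assert (Hs : 1 <= INR (S n) ^ 2).
    { rewrite <- (pow1 2). apply pow_incr. rewrite S_INR. generalize (pos_INR n). lra. }
    assert (HPI := PI_RGT_0).
    assert (0 <= PI * (INR (S n) ^ 2 - 1) * (x - y)) by (apply Rmult_le_pos; nra).
    nra.
  - apply ex_series_scal_r, ex_series_Psi. lra.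
Qed.

Lemma Psi_continuous (x : R) : 0 < x -> continuous Psi x.
Proof.
  intros Hx.
  apply (continuous_Series_dominated (fun n y => exp (- PI * INR (S n) ^ 2 * y))
           (fun n => exp (- PI * (x / 2)) ^ S n) (fun y => x / 2 < y)).
  - apply open_gt.
  - lra.
  - apply ex_series_pow_S, exp_opp_PI_lt_1. lra.
  - intros n y Hy. rewrite Rabs_pos_eq by apply Rlt_le, exp_pos.
    eapply Rle_trans; [apply Psi_term_le_geom; lra |].
    apply pow_incr. split; [apply Rlt_le, exp_pos |].
    apply exp_le_exp_compat. generalize PI_RGT_0; nra.
  - intros n y _. apply ex_derive_continuous_R. auto_derive. easy.
Qed.

(** * Tricomi's U at (2k + 2, 1/2) *)

Definition tricomi_weight (k : nat) (u : R) : R :=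
  u ^ (2 * k + 1) / Rpower (1 + u) (INR (2 * k) + 5 / 2).

Definition tricomi_int (k : nat) (z : R) : R :=
  RInt_gen (fun u => exp (- z * u) * tricomi_weight k u) (at_point 0) (Rbar_locally p_infty).

Lemma tricomi_weight_bound (k : nat) (u : R) : 0 <= u -> 0 <= tricomi_weight k u <= 1.
Proof.
  intros Hu. unfold tricomi_weight.
  assert (Hpow : 0 < Rpower (1 + u) (INR (2 * k) + 5 / 2)) by apply exp_pos.
  assert (Hle : u ^ (2 * k + 1) <= Rpower (1 + u) (INR (2 * k) + 5 / 2)).
  { apply Rle_trans with ((1 + u) ^ (2 * k + 1)); [apply pow_incr; lra |].
    rewrite <- Rpower_pow by lra. apply Rle_Rpower; [lra |].
    rewrite plus_INR. simpl INR. lra. }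
  split.
  - apply Rdiv_le_0_compat; [apply pow_le |]; lra.
  - apply Rmult_le_reg_r with (Rpower (1 + u) (INR (2 * k) + 5 / 2)); [exact Hpow |].
    rewrite Rdiv_def, Rmult_assoc, Rinv_l, Rmult_1_l, Rmult_1_r by lra. exact Hle.
Qed.

Lemma tricomi_weight_continuous (k : nat) (u : R) : -1 < u -> continuous (tricomi_weight k) u.
Proof.
  intros Hu. apply ex_derive_continuous_R. unfold tricomi_weight, Rpower.
  auto_derive. repeat split; [lra | apply Rgt_not_eq, exp_pos].
Qed.

Lemma is_RInt_gen_exp (c : R) : 0 < c ->
  is_RInt_gen (fun u => exp (- c * u)) (at_point 0) (Rbar_locally p_infty) (/ c).
Proof.
  intros Hc. replace (/ c) with (0 - - exp (- c * 0) / c) by (rewrite Rmult_0_r, exp_0; field; lra).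
  apply (is_RInt_gen_pinfty_derive _ (fun u => - exp (- c * u) / c)).
  - intros x _. auto_derive; [easy | field; lra].
  - intros x _. apply ex_derive_continuous_R. auto_derive. easy.
  - apply (is_lim_ext (fun u => (- / c) * (exp (- c * u) * u ^ 0))); [intros; simpl; field; lra |].
    replace (Finite 0) with (Finite (- / c * 0)) by (f_equal; ring).
    apply (is_lim_scal_l _ _ _ 0), is_lim_exp_mul_pow, Hc.
Qed.

Lemma is_RInt_gen_tricomi_int (k : nat) (z : R) : 0 < z ->
  is_RInt_gen (fun u => exp (- z * u) * tricomi_weight k u) (at_point 0) (Rbar_locally p_infty)
    (tricomi_int k z).
Proof.
  intros Hz. apply (RInt_gen_correct (V := R_CompleteNormedModule)).
  apply (ex_RInt_gen_pinfty_le _ (fun u => exp (- z * u))).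
  - intros b Hb. apply ex_RInt_continuous_le; [exact Hb |]. intros x Hx.
    apply (continuous_mult (fun u => exp (- z * u))); [| apply tricomi_weight_continuous; lra].
    apply ex_derive_continuous_R. auto_derive. easy.
  - intros b Hb. apply ex_RInt_continuous_le; [exact Hb |]. intros x _.
    apply ex_derive_continuous_R. auto_derive. easy.
  - intros t Ht. destruct (tricomi_weight_bound k t Ht).
    rewrite Rabs_pos_eq by (apply Rmult_le_pos; [apply Rlt_le, exp_pos | lra]).
    rewrite <- (Rmult_1_r (exp (- z * t))) at 2.
    apply Rmult_le_compat_l; [apply Rlt_le, exp_pos | lra].
  - exists (/ z). now apply is_RInt_gen_exp.
Qed.

Lemma tricomi_int_pos (k : nat) (z : R) : 0 < z -> 0 < tricomi_int k z.
Proof.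
  intros Hz. set (f := fun u => exp (- z * u) * tricomi_weight k u).
  assert (Hf : forall x, 0 <= x -> continuous f x).
  { intros x Hx. apply (continuous_mult (fun u => exp (- z * u))).
    - apply ex_derive_continuous_R. auto_derive. easy.
    - apply tricomi_weight_continuous. lra. }
  assert (Hex : forall a b, 0 <= a <= b -> ex_RInt f a b).
  { intros a b Hab. apply ex_RInt_continuous_le; [lra |]. intros x Hx. apply Hf. lra. }
  assert (H01 : 0 < RInt f 0 1).
  { apply RInt_gt_0; [lra | | intros x Hx; apply Hf; lra].
    intros x Hx. apply Rmult_lt_0_compat; [apply exp_pos |].
    apply Rdiv_lt_0_compat; [apply pow_lt; lra | apply exp_pos]. }
  apply Rlt_le_trans with (RInt f 0 1); [exact H01 |].
  change (Rbar_le (RInt f 0 1) (tricomi_int k z)).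
  apply (is_lim_le_loc (fun _ => RInt f 0 1) (fun b => RInt f 0 b) p_infty).
  - exists 1. intros b Hb.
    assert (Hexp := RInt_sub_Chasles f 0 1 b (Hex 0 1 ltac:(lra)) (Hex 1 b ltac:(lra))).
    assert (0 <= RInt f 1 b); [| lra].
    apply RInt_ge_0; [lra | apply Hex; lra |]. intros x Hx.
    apply Rmult_le_pos; [apply Rlt_le, exp_pos | apply tricomi_weight_bound; lra].
  - apply is_lim_const.
  - apply filterlim_RInt_of_is_RInt_gen, is_RInt_gen_tricomi_int, Hz.
Qed.

Lemma TricomiU_odd (k : nat) (z : R) : 0 < z ->
  TricomiU (INR (2 * k + 2)) (1 / 2) z = tricomi_int k z / INR (fact (2 * k + 1)).
Proof.
  intros Hz. unfold TricomiU.
  assert (HS : INR (2 * k + 2) = INR (S (2 * k + 1))) by (f_equal; lia).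
  rewrite HS at 1. rewrite Gamma_S, Rmult_comm. apply Rmult_eq_compat_r.
  apply (RInt_gen_at_right_of_at_point (fun u => exp (- z * u) * tricomi_weight k u) _ 0 1 1);
    [lra | | | | now apply is_RInt_gen_tricomi_int].
  - apply ex_RInt_continuous_le; [lra |]. intros x Hx.
    apply (continuous_mult (fun u => exp (- z * u))); [| apply tricomi_weight_continuous; lra].
    apply ex_derive_continuous_R. auto_derive. easy.
  - intros x Hx. destruct (tricomi_weight_bound k x ltac:(lra)).
    assert (exp (- z * x) <= 1) by (rewrite <- exp_0; apply exp_le_exp_compat; nra).
    rewrite Rabs_pos_eq by (apply Rmult_le_pos; [apply Rlt_le, exp_pos | lra]).
    rewrite <- (Rmult_1_l 1). apply Rmult_le_compat; try lra. apply Rlt_le, exp_pos.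
  - intros x Hx. unfold tricomi_weight. rewrite HS, S_INR.
    replace (INR (2 * k + 1) + 1 - 1) with (INR (2 * k + 1)) by ring.
    replace (1 / 2 - (INR (2 * k + 1) + 1) - 1) with (- (INR (2 * k) + 5 / 2))
      by (rewrite plus_INR; simpl INR; field).
    rewrite Rpower_pow, Rpower_Ropp by lra. now rewrite Rmult_assoc.
Qed.

(** * The weight of epsilon_(2k+1) *)

Definition epsilon_weight (k : nat) (t : R) : R :=
  (t - 1) ^ (2 * k + 1) / Rpower (1 + t) (INR (2 * k) + 5 / 2).

Lemma epsilon_weight_nonneg (k : nat) (t : R) : 1 <= t -> 0 <= epsilon_weight k t.
Proof. intros Ht. apply Rdiv_le_0_compat; [apply pow_le; lra | apply exp_pos]. Qed.

Lemma epsilon_weight_continuous (k : nat) (t : R) : -1 < t -> continuous (epsilon_weight k) t.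
Proof.
  intros Ht. apply ex_derive_continuous_R. unfold epsilon_weight, Rpower.
  auto_derive. repeat split; [lra | apply Rgt_not_eq, exp_pos].
Qed.

Lemma epsilon_weight_affine (k : nat) (u : R) : -1 < u ->
  epsilon_weight k (2 * u + 1) = tricomi_weight k u / (2 * sqrt 2).
Proof.
  intros Hu. unfold epsilon_weight, tricomi_weight.
  replace (2 * u + 1 - 1) with (2 * u) by ring.
  replace (1 + (2 * u + 1)) with (2 * (1 + u)) by ring.
  rewrite <- Rpower_mult_distr, Rpow_mult_distr by lra.
  replace (INR (2 * k) + 5 / 2) with (INR (S (2 * k + 1)) + / 2)
    by (rewrite S_INR, plus_INR; simpl INR; field).
  rewrite Rpower_plus, Rpower_sqrt, Rpower_pow by lra.
  assert (0 < sqrt 2) by (apply sqrt_lt_R0; lra).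
  assert (0 < Rpower (1 + u) (INR (S (2 * k + 1)) + / 2)) by apply exp_pos.
  assert (0 < 2 ^ (2 * k + 1)) by (apply pow_lt; lra).
  change (2 ^ S (2 * k + 1)) with (2 * 2 ^ (2 * k + 1)).
  field. lra.
Qed.

Lemma is_RInt_gen_exp_epsilon_weight (k : nat) (c : R) : 0 < c ->
  is_RInt_gen (fun t => exp (- c * (t - 1)) * epsilon_weight k t) (at_point 1)
    (Rbar_locally p_infty) (tricomi_int k (2 * c) / sqrt 2).
Proof.
  intros Hc. set (f := fun t => exp (- c * (t - 1)) * epsilon_weight k t).
  assert (Hsub := is_RInt_gen_pinfty_comp_lin f 2 1 0 (tricomi_int k (2 * c) / sqrt 2) Rlt_0_2).
  assert (Hpt : forall u, -1 < u ->
            / sqrt 2 * (exp (- (2 * c) * u) * tricomi_weight k u) = 2 * f (2 * u + 1)).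
  { intros u Hu. unfold f. rewrite epsilon_weight_affine by lra.
    replace (- c * (2 * u + 1 - 1)) with (- (2 * c) * u) by ring.
    assert (0 < sqrt 2) by (apply sqrt_lt_R0; lra). field. lra. }
  replace (2 * 0 + 1) with 1 in Hsub by ring. apply Hsub.
  - intros b Hb. apply ex_RInt_continuous_le; [exact Hb |]. intros x Hx.
    apply (continuous_mult (fun t => exp (- c * (t - 1)))).
    + apply ex_derive_continuous_R. auto_derive. easy.
    + apply epsilon_weight_continuous. lra.
  - apply (is_RInt_gen_ext (fun u => / sqrt 2 * (exp (- (2 * c) * u) * tricomi_weight k u))).
    + apply (Filter_prod _ _ _ (fun x => x = 0) (fun y => 0 < y)); [reflexivity | now exists 0 |].
      intros x y -> Hy u Hu. simpl in Hu. rewrite Rmin_left, Rmax_right in Hu by lra.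
      apply Hpt. lra.
    + rewrite Rdiv_def, (Rmult_comm (tricomi_int k (2 * c))).
      apply (is_RInt_gen_pinfty_scal (fun u => exp (- (2 * c) * u) * tricomi_weight k u)).
      apply is_RInt_gen_tricomi_int. lra.
Qed.

Lemma is_RInt_gen_Psi_epsilon_weight (k : nat) (c : R) : 0 < c ->
  exists L, is_RInt_gen (fun t => Psi (c * t) * epsilon_weight k t) (at_point 1)
              (Rbar_locally p_infty) L
    /\ 0 <= L <= Psi c * tricomi_int k (2 * PI * c) / sqrt 2.
Proof.
  intros Hc. set (f := fun t => Psi (c * t) * epsilon_weight k t).
  set (g := fun t => Psi c * (exp (- (PI * c) * (t - 1)) * epsilon_weight k t)).
  assert (Hf_ge0 : forall t, 1 <= t -> 0 <= f t).
  { intros t Ht. apply Rmult_le_pos; [apply Rlt_le, Psi_pos; nra |].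
    now apply epsilon_weight_nonneg. }
  assert (Hfg : forall t, 1 <= t -> Rabs (f t) <= g t).
  { intros t Ht. rewrite Rabs_pos_eq by now apply Hf_ge0. unfold f, g. rewrite <- Rmult_assoc.
    apply Rmult_le_compat_r; [now apply epsilon_weight_nonneg |].
    replace (- (PI * c) * (t - 1)) with (- PI * (c * t - c)) by ring.
    apply Psi_le_exp. nra. }
  assert (Hg : is_RInt_gen g (at_point 1) (Rbar_locally p_infty)
                 (Psi c * tricomi_int k (2 * PI * c) / sqrt 2)).
  { rewrite Rdiv_def, (Rmult_assoc (Psi c)). replace (2 * PI * c) with (2 * (PI * c)) by ring.
    apply (is_RInt_gen_pinfty_scal (fun t => exp (- (PI * c) * (t - 1)) * epsilon_weight k t)).
    apply is_RInt_gen_exp_epsilon_weight. generalize PI_RGT_0; nra. }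
  assert (Hloc : forall h : R -> R, (forall t, 1 <= t -> continuous h t) ->
                 forall b, 1 <= b -> @ex_RInt R_NormedModule h 1 b).
  { intros h Hh b Hb. apply ex_RInt_continuous_le; [exact Hb |]. intros x Hx. apply Hh. lra. }
  destruct (ex_RInt_gen_pinfty_le f g 1) as [L HL]; try assumption.
  - apply Hloc. intros t Ht. apply (continuous_mult (fun t => Psi (c * t))).
    + apply (continuous_comp (fun t => c * t) Psi).
      * apply ex_derive_continuous_R. auto_derive. easy.
      * apply Psi_continuous. nra.
    + apply epsilon_weight_continuous. lra.
  - apply Hloc. intros t Ht.
    apply (continuous_mult (fun _ => Psi c)); [apply continuous_const |].
    apply (continuous_mult (fun t => exp (- (PI * c) * (t - 1)))).
    + apply ex_derive_continuous_R. auto_derive. easy.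
    + apply epsilon_weight_continuous. lra.
  - now exists (Psi c * tricomi_int k (2 * PI * c) / sqrt 2).
  - exists L. split; [exact HL | split].
    + exact (is_RInt_gen_pinfty_ge0 f 1 L Hf_ge0 HL).
    + generalize (is_RInt_gen_pinfty_abs_le f g 1 _ _ Hfg HL Hg) (Rle_abs L). lra.
Qed.

Lemma phi_a_Psi (a t : R) : phi_a a t = Psi (a * t).
Proof. apply Series_ext. intros n. f_equal. ring. Qed.

Lemma psi_a_Psi (a t : R) : psi_a a t = Psi (/ a * t).
Proof. apply Series_ext. intros n. f_equal. unfold Rdiv. ring. Qed.

Lemma epsilon_odd_eq (k : nat) (a L1 L2 : R) :
  is_RInt_gen (fun t => Psi (a * t) * epsilon_weight k t)
    (at_point 1) (Rbar_locally p_infty) L1 ->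
  is_RInt_gen (fun t => Psi (/ a * t) * epsilon_weight k t)
    (at_point 1) (Rbar_locally p_infty) L2 ->
  epsilon_odd k a = / (4 * PI * a) * (Rpower a (1 / 2) * L1 - L2).
Proof.
  intros HL1 HL2.
  assert (Hpt : forall t, Rpower a (1 / 2) * (Psi (a * t) * epsilon_weight k t)
                          - Psi (/ a * t) * epsilon_weight k t
                        = (Rpower a (1 / 2) * phi_a a t - psi_a a t) * epsilon_weight k t).
  { intros t. rewrite phi_a_Psi, psi_a_Psi. ring. }
  unfold epsilon_odd. f_equal.
  apply is_RInt_gen_unique.
  assert (H := is_RInt_gen_minus _ _ _ _
                 (is_RInt_gen_pinfty_scal _ (Rpower a (1 / 2)) _ _ HL1) HL2).
  refine (is_RInt_gen_ext _ _ _ _ H). apply filter_forall. intros ab t _. apply Hpt.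
Qed.

Lemma B_odd_eq (k : nat) (a : R) : 0 < a ->
  B_odd k a = / (4 * PI * a) *
    (Rpower a (1 / 2) * (Psi a * tricomi_int k (2 * PI * a) / sqrt 2)
     + Psi (/ a) * tricomi_int k (2 * PI * / a) / sqrt 2).
Proof.
  intros Ha. assert (HPI := PI_RGT_0).
  unfold B_odd, E_odd.
  assert (Hz1 : 0 < 2 * PI * a) by nra.
  assert (Hz2 : 0 < 2 * PI * / a) by (generalize (Rinv_0_lt_compat a Ha); nra).
  rewrite !TricomiU_odd by assumption.
  set (r := Rpower a (-3 / 4)).
  assert (Hr : 0 < r) by apply exp_pos.
  assert (E1 : Rpower a (1 / 4) = Rpower a (1 / 2) / a / r).
  { unfold r. replace (1 / 4) with (1 / 2 + - (1) + - (-3 / 4)) by field.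
    rewrite !Rpower_plus, !Rpower_Ropp, Rpower_1 by exact Ha. field.
    split; [lra | apply Rgt_not_eq, exp_pos]. }
  assert (E2 : Rpower (/ a) (1 / 4) = / a / r).
  { unfold r. replace (Rpower (/ a) (1 / 4)) with (Rpower a (- (1) + - (-3 / 4))).
    - rewrite !Rpower_plus, !Rpower_Ropp, Rpower_1 by exact Ha. field.
      split; [lra | apply Rgt_not_eq, exp_pos].
    - unfold Rpower. rewrite ln_Rinv by exact Ha. f_equal. field. }
  rewrite E1, E2.
  assert (0 < sqrt 2) by (apply sqrt_lt_R0; lra).
  assert (0 < INR (fact (2 * k + 1))) by apply lt_0_INR, lt_O_fact.
  field. repeat split; lra.
Qed.

Theorem theorem4 (a : R) (k : nat) (ha : 0 < a) :
  Rabs (epsilon_odd k a) < B_odd k a.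
Proof.
  assert (HPI := PI_RGT_0).
  destruct (is_RInt_gen_Psi_epsilon_weight k a ha) as [L1 [HL1 HL1b]].
  destruct (is_RInt_gen_Psi_epsilon_weight k (/ a) (Rinv_0_lt_compat a ha)) as [L2 [HL2 HL2b]].
  rewrite (epsilon_odd_eq k a L1 L2 HL1 HL2), (B_odd_eq k a ha).
  assert (Hbound : forall c, 0 < c -> 0 < Psi c * tricomi_int k (2 * PI * c) / sqrt 2).
  { intros c Hc. apply Rdiv_lt_0_compat; [| apply sqrt_lt_R0; lra].
    apply Rmult_lt_0_compat; [now apply Psi_pos | apply tricomi_int_pos; nra]. }
  assert (Hsa : 0 < Rpower a (1 / 2)) by apply exp_pos.
  generalize (Hbound a ha) (Hbound (/ a) (Rinv_0_lt_compat a ha)); intros H1 H2.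
  rewrite Rabs_mult, Rabs_pos_eq by (apply Rlt_le, Rinv_0_lt_compat; nra).
  apply Rmult_lt_compat_l; [apply Rinv_0_lt_compat; nra |].
  apply Rabs_lt_between. nra.
Qed.
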